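(* Let $N\ge 5$ be odd and let $A$ be a compressible arrangement in the $N\times N$ square. Then $A$ is an acyclic polyomino if and only if its compression $C(A)$ is an acyclic polyomino each of whose holes has area one.
   Context: An arrangement in a rectangle is a choice of which unit squares (spaces) of the rectangle are filled with tiles; a polyomino is a finite union of closed unit tiles, meeting only in whole edges, with connected interior; its holes are the bounded components of the complement, the area of a hole is the number of unit squares filling it, and it is acyclic if its dual graph (tiles, adjacency along edges) is a tree. For the $N\times N$ square, its boundary layer is the outermost ring of spaces; $D_1$ denotes the boundary arrangement in which all ring spaces except the four corners are filled, $D_2$ the one with all ring spaces filled except exactly one corner. Index the interior $(N-2)\times(N-2)$ spaces by $(i,j)$, $1\le i,j\le N-2$, from the top-left; $W$ = spaces with $i+j$ even, $B$ = spaces with $i+j$ odd. For odd $N$, $P_N$ is the partial arrangement of the interior in which every space of $B$ is filled and every space $(i,j)$ with $i,j$ both odd is empty; the remaining spaces, $(i,j)$ with $i,j$ both even, form the $\frac{N-3}{2}\times\frac{N-3}{2}$ grid $U_N$. An arrangement $A$ in the $N\times N$ square is compressible if its boundary-layer part $D$ satisfies $D_1\subseteq D\subseteq D_2$ and its interior agrees with $P_N$; its compression $C(A)$ is the arrangement in the $\frac{N+1}{2}\times\frac{N+1}{2}$ square with the same boundary $D$ (placed at the corresponding positions) and whose interior space $(a,b)$ is filled iff space $(2a,2b)$ of $U_N$ is filled in $A$. *)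

From mathcomp Require Import all_boot.
Set Implicit Arguments. Unset Strict Implicit. Unset Printing Implicit Defensive.

(* Spaces (unit squares) of the n x n square: (row, column), 0-based from the
   top-left.  An interior space with interior index (i,j) (1-based, 1 <= i,j <= n-2)
   is exactly the space with 0-based square coordinates (i,j). *)
Definition cell (n : nat) := ('I_n * 'I_n)%type.

Definition arrangement (n : nat) := {set cell n}.

Definition adj n (x y : cell n) : bool :=
  ((x.1 == y.1 :> nat) && ((x.2.+1 == y.2 :> nat) || (y.2.+1 == x.2 :> nat)))
  || ((x.2 == y.2 :> nat) && ((x.1.+1 == y.1 :> nat) || (y.1.+1 == x.1 :> nat))).

Definition dual n (A : arrangement n) : rel (cell n) :=
  fun x y => [&& x \in A, y \in A & adj x y].

(* A is a polyomino: nonempty with connected interior, i.e. the filled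
   spaces are connected through shared edges. *)
Definition polyomino n (A : arrangement n) : Prop :=
  A != set0 /\ forall x y, x \in A -> y \in A -> connect (dual A) x y.

Definition has_dual_cycle n (A : arrangement n) : Prop :=
  exists c : seq (cell n), [/\ uniq c, 2 < size c & cycle (dual A) c].

Definition acyclic_polyomino n (A : arrangement n) : Prop :=
  polyomino A /\ ~ has_dual_cycle A.

Definition on_ring n (x : cell n) : bool :=
  [|| x.1 == 0 :> nat, x.1 == n.-1 :> nat, x.2 == 0 :> nat | x.2 == n.-1 :> nat].
Definition is_corner n (x : cell n) : bool :=
  ((x.1 == 0 :> nat) || (x.1 == n.-1 :> nat)) &&
  ((x.2 == 0 :> nat) || (x.2 == n.-1 :> nat)).

Definition empty_adj n (A : arrangement n) : rel (cell n) :=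
  fun x y => [&& x \notin A, y \notin A & adj x y].

(* Holes: bounded components of the complement of the polyomino.  These are
   exactly the edge-connected components of empty spaces that contain no
   space of the boundary layer (such a component is not adjacent to the
   unbounded exterior of the square).  The area of a hole is its number of
   spaces, #|H|. *)
Definition is_hole n (A : arrangement n) (H : {set cell n}) : Prop :=
  exists2 x, x \notin A &
    H = [set y | connect (empty_adj A) x y] /\ (forall y, y \in H -> ~~ on_ring y).

(* Compressible arrangement (N odd): boundary part D with D1 <= D <= D2,
   i.e. every non-corner ring space is filled and (some) corner is empty,
   and interior agreeing with P_N: spaces with i+j odd filled, spaces with
   i,j both odd empty. *)
Definition compressible n (A : arrangement n) : Prop :=
  [/\ forall x : cell n, on_ring x -> ~~ is_corner x -> x \in A,
      exists2 x : cell n, is_corner x & x \notin A,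
      forall x : cell n, ~~ on_ring x -> odd (x.1 + x.2) -> x \in A &
      forall x : cell n, ~~ on_ring x -> odd x.1 -> odd x.2 -> x \notin A].

Definition filled n (A : arrangement n) (r c : nat) : bool :=
  [exists x in A, (x.1 == r :> nat) && (x.2 == c :> nat)].

(* On the boundary this sends
   corners to corners and side spaces to side spaces (placing D at the
   corresponding positions); in the interior (a,b) goes to (2a,2b) of U_N. *)
Definition compress n (A : arrangement n) : arrangement (n.+1)./2 :=
  [set x : cell (n.+1)./2 | filled A (2 * x.1) (2 * x.2)].

(* Split the spaces of the big square by parity: vertex spaces (both
   coordinates even) are the images [dbl y] of the spaces of the compression,
   edge spaces (odd coordinate sum) are the midpoints [mid y z] of adjacent
   spaces of the compression, and face spaces have both coordinates odd.
   Compressibility fills every edge space and empties every face space, so the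
   dual graph of A is the grid graph on C with every grid edge subdivided,
   except that an edge space with one filled end is a pendant leaf and one with
   no filled end is isolated.  Subdividing and adding leaves changes neither
   connectivity nor the existence of cycles (an edge lies on a cycle iff its
   ends stay connected once it is deleted), while an isolated edge space
   disconnects A.  Hence A is an acyclic polyomino iff C is one and every grid
   edge has a filled end; as the non-corner ring spaces of C are filled, the
   latter says that every hole of C is a single space. *)

From mathcomp Require Import all_boot zify.
Set Implicit Arguments. Unset Strict Implicit. Unset Printing Implicit Defensive.

Section Graphs.
Variable T : finType.
Implicit Types (e : rel T) (a b u v x y : T).

Lemma connect_invariant e (P : T -> Prop) x y :
  P x -> (forall u v, P u -> e u v -> P v) -> connect e x y -> P y.
Proof.
move=> Px step /connectP[p + ->]; elim: p x Px => //= v p IHp u Pu /andP[euv].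
exact/IHp/(step u v).
Qed.

Lemma connect_isolated e x y : (forall w, ~~ e x w) -> connect e x y -> y = x.
Proof.
move=> iso; apply: (connect_invariant (P := eq^~ x)) => // u v ->.
by rewrite (negbTE (iso v)).
Qed.

Definition remove_edge e a b : rel T :=
  fun u v => e u v && ~~ ((u == a) && (v == b) || (u == b) && (v == a)).

Lemma remove_edgeC e a b : remove_edge e a b =2 remove_edge e b a.
Proof. by move=> u v; rewrite /remove_edge orbC. Qed.

Variable e : rel T.
Hypotheses (e_sym : symmetric e) (e_irr : irreflexive e).

Lemma remove_edge_sym a b : symmetric (remove_edge e a b).
Proof. by move=> u v; rewrite /remove_edge e_sym orbC (andbC (u == b)) (andbC (u == a)). Qed.

Lemma remove_loop a : remove_edge e a a =2 e.
Proof.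
move=> u v; rewrite /remove_edge orbb andbC.
by case: eqP => [->|] //=; case: eqP => [->|]; rewrite ?e_irr ?andbT.
Qed.

Lemma uniq_cycle_nonbridge :
  (exists c : seq T, [/\ uniq c, 2 < size c & cycle e c]) <->
  exists a b, e a b /\ connect (remove_edge e a b) a b.
Proof.
split=> [[[|x [|y [|z q]]] [uc //= _]] | [a [b [eab /connectP[p]]]]].
  move=> /andP[exy /andP[eyz]]; rewrite rcons_path => /andP[ezq eqx].
  move: uc; rewrite /= !inE !negb_or => /and4P[/and3P[xy xz _] /andP[yz yq] _ _].
  exists x, y; split=> //; rewrite (sym_connect_sym (remove_edge_sym x y)).
  have kept u w : u != y -> w != y -> e u w -> remove_edge e x y u w.
    by move=> uy wy euw; rewrite /remove_edge euw (negbTE uy) (negbTE wy) !andbF.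
  apply: (connect_trans (y := z)).
    by apply: connect1; rewrite /remove_edge eyz eqxx !(eq_sym _ x) (negbTE xy) (negbTE xz).
  apply/connectP; exists (rcons q x); last by rewrite last_rcons.
  apply: (sub_in_path (P := predC1 y) (e := e)) => [u w /[!inE] uy wy||]; first exact: kept.
    by rewrite /= all_rcons !inE eq_sym yz xy; apply/allP => w wq; apply: contraNneq yq => <-.
  by rewrite rcons_path ezq eqx.
case/shortenP=> p' pp' up' _ pb; exists (a :: p'); split=> //.
  case: p' pp' up' pb => [_ _ ba|w [|w' p'']] //=; first by move: eab; rewrite ba e_irr.
  by rewrite /remove_edge => /andP[/andP[_]] + _ _ ba; rewrite -ba !eqxx.
rewrite /= rcons_path -pb e_sym eab andbT.
by apply: sub_path pp' => u w /andP[].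
Qed.

End Graphs.

Section Grid.
Variable n : nat.
Implicit Types (x y t : cell n) (B : arrangement n).

Lemma cell_eqE x y : (x == y) = ((x.1 : nat) == y.1) && ((x.2 : nat) == y.2).
Proof. by []. Qed.

Lemma cell_ext x y : (x.1 : nat) = y.1 -> (x.2 : nat) = y.2 -> x = y.
Proof. by move=> e1 e2; apply/eqP; rewrite cell_eqE e1 e2 !eqxx. Qed.

Lemma adj_sym : symmetric (@adj n).
Proof. by move=> x y; rewrite /adj; apply/idP/idP; lia. Qed.

Lemma adj_irr : irreflexive (@adj n).
Proof. by move=> x; rewrite /adj; apply/negP; lia. Qed.

Lemma odd_adj x y : adj x y -> odd (y.1 + y.2) = ~~ odd (x.1 + x.2).
Proof. by rewrite /adj => axy; apply/idP/idP; lia. Qed.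

Lemma dual_sym B : symmetric (dual B).
Proof. by move=> x y; rewrite /dual adj_sym andbCA. Qed.

Lemma dual_irr B : irreflexive (dual B).
Proof. by move=> x; rewrite /dual adj_irr !andbF. Qed.

Lemma has_dual_cycle_nonbridge B :
  has_dual_cycle B <-> exists a b, dual B a b /\ connect (remove_edge (dual B) a b) a b.
Proof. exact: uniq_cycle_nonbridge (dual_sym B) (dual_irr B). Qed.

Definition ring_filled B := forall x, on_ring x -> ~~ is_corner x -> x \in B.

Definition grid_cover B := forall x y, adj x y -> x \in B \/ y \in B.

Hypothesis n_gt2 : 2 < n.

Lemma ring_filled_card B : ring_filled B -> 1 < #|B|.
Proof.
move=> ringB; pose o0 := Ordinal (ltnW (ltnW n_gt2)); pose o1 := Ordinal (ltnW n_gt2).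
apply: leq_trans (subset_leq_card (_ : [set (o0, o1); (o1, o0)] \subset B)).
  by rewrite cards2.
by apply/subsetP => x /set2P[]->; apply: ringB; rewrite /on_ring /is_corner /=; lia.
Qed.

Lemma empty_ring_isolated B x : ring_filled B -> on_ring x -> forall y, ~~ empty_adj B x y.
Proof.
move=> ringB rx y; apply/and3P=> [[xB yB axy]].
have cx : is_corner x by apply: contraNT xB; apply: ringB.
have [ry cy] : on_ring y /\ ~~ is_corner y.
  by apply/andP; move: cx axy; rewrite /is_corner /on_ring /adj; have := ltn_ord y.1;
    have := ltn_ord y.2; have := ltn_ord x.1; have := ltn_ord x.2; lia.
by rewrite ringB in yB.
Qed.

Lemma holes_singleton_cover B : ring_filled B ->
  (forall H, is_hole B H -> #|H| = 1) <-> grid_cover B.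
Proof.
move=> ringB; split=> [holes1 t t' att | cover H [x xB [-> _]]]; last first.
  suff -> : [set y | connect (empty_adj B) x y] = [set x] by rewrite cards1.
  apply/setP=> y; rewrite !inE; apply/idP/eqP=> [|->]; last exact: connect0.
  apply: connect_isolated => w; apply/and3P=> [[_ wB axw]].
  by case: (cover _ _ axw); apply/negP.
have [|tB] := boolP (t \in B); first by left.
have [|t'B] := boolP (t' \in B); [by right | exfalso].
have ett : empty_adj B t t' by rewrite /empty_adj tB t'B att.
have esym : symmetric (empty_adj B) by move=> x y; rewrite /empty_adj adj_sym andbCA.
pose H := [set y | connect (empty_adj B) t y].
have /holes1 : is_hole B H.
  exists t => //; split=> // y; rewrite inE => ty; apply/negP => ry.
  have iso := empty_ring_isolated ringB ry.
  have yt : t = y by apply: connect_isolated iso _; rewrite (sym_connect_sym esym).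
  by move: (iso t'); rewrite -yt ett.
have tt' : t != t' by apply: contraTneq att => ->; rewrite adj_irr.
have /subset_leq_card : [set t; t'] \subset H.
  by apply/subsetP => x /set2P[]->; rewrite inE ?connect0 ?connect1.
by rewrite cards2 tt' => /[swap] ->.
Qed.
End Grid.

Section Compression.
Variable n : nat.
Hypothesis n_even : ~~ odd n.
Implicit Types (x u v w : cell n.+1) (y z t s : cell (n./2).+1).

Definition dbl y : cell n.+1 := (inord (2 * y.1), inord (2 * y.2)).
Definition mid y z : cell n.+1 := (inord (y.1 + z.1), inord (y.2 + z.2)).
Definition halve x : cell (n./2).+1 := (inord x.1./2, inord x.2./2).

Lemma dbl1 y : (dbl y).1 = 2 * y.1 :> nat.
Proof. by rewrite /= inordK //; have := ltn_ord y.1; lia. Qed.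
Lemma dbl2 y : (dbl y).2 = 2 * y.2 :> nat.
Proof. by rewrite /= inordK //; have := ltn_ord y.2; lia. Qed.
Lemma mid1 y z : (mid y z).1 = y.1 + z.1 :> nat.
Proof. by rewrite /= inordK //; have := ltn_ord y.1; have := ltn_ord z.1; lia. Qed.
Lemma mid2 y z : (mid y z).2 = y.2 + z.2 :> nat.
Proof. by rewrite /= inordK //; have := ltn_ord y.2; have := ltn_ord z.2; lia. Qed.
Lemma halve1 x : (halve x).1 = x.1./2 :> nat.
Proof. by rewrite /= inordK //; have := ltn_ord x.1; lia. Qed.
Lemma halve2 x : (halve x).2 = x.2./2 :> nat.
Proof. by rewrite /= inordK //; have := ltn_ord x.2; lia. Qed.

Ltac coords := rewrite ?cell_eqE /adj ?(dbl1, dbl2, mid1, mid2, halve1, halve2) /=.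

Lemma dblK : cancel dbl halve.
Proof. by move=> y; apply: cell_ext; coords; lia. Qed.

Lemma dbl_inj : injective dbl.
Proof. exact: can_inj dblK. Qed.

Lemma halveK x : ~~ odd x.1 -> ~~ odd x.2 -> dbl (halve x) = x.
Proof. by move=> e1 e2; apply: cell_ext; coords; lia. Qed.

Lemma midC y z : mid y z = mid z y.
Proof. by apply: cell_ext; coords; lia. Qed.

Lemma mid_id y : mid y y = dbl y.
Proof. by apply: cell_ext; coords; lia. Qed.

Lemma odd_dbl y : ~~ odd ((dbl y).1 + (dbl y).2).
Proof. by coords; lia. Qed.

Lemma odd_mid y z : adj y z -> odd ((mid y z).1 + (mid y z).2).
Proof. by coords; lia. Qed.

Lemma dbl_neq_mid y z t : adj z t -> dbl y != mid z t.
Proof. by move/odd_mid; apply: contraTneq => <-; rewrite odd_dbl. Qed.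

Lemma adj_dbl_mid y z : adj y z -> adj (dbl y) (mid y z).
Proof. by coords; lia. Qed.

Lemma adj_dbl_midE t y z : adj y z -> adj (dbl t) (mid y z) -> t = y \/ t = z.
Proof.
move=> ayz atm; have [[e1 e2]|[e1 e2]] : (t.1 = y.1 :> nat /\ t.2 = y.2 :> nat) \/
  (t.1 = z.1 :> nat /\ t.2 = z.2 :> nat) by move: ayz atm; coords; lia.
- by left; apply: cell_ext.
- by right; apply: cell_ext.
Qed.

(* The other end is [x - s]; it lies in the small square only because n is even. *)
Lemma adj_dblP s x : adj (dbl s) x -> odd (x.1 + x.2) -> exists2 s', adj s s' & x = mid s s'.
Proof.
move=> asx ox; have [s' [e1 e2]] : exists s' : cell (n./2).+1,
    s'.1 = x.1 - s.1 :> nat /\ s'.2 = x.2 - s.2 :> nat.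
  exists (inord (x.1 - s.1), inord (x.2 - s.2)); rewrite /= !inordK //;
    by move: asx ox; coords; have := ltn_ord x.1; have := ltn_ord x.2; lia.
exists s'; first by move: asx ox; coords; lia.
by apply: cell_ext; move: asx ox; coords; lia.
Qed.

Variable A : arrangement n.+1.
Hypothesis A_compressible : compressible A.
Local Notation C := (compress A : arrangement (n./2).+1).

Lemma mem_compress y : (y \in C) = (dbl y \in A).
Proof.
rewrite inE; apply/existsP/idP => [[x /and3P[xA /eqP e1 /eqP e2]] | yA].
  by rewrite (_ : dbl y = x) //; apply: cell_ext; rewrite ?dbl1 ?dbl2.
by exists (dbl y); rewrite yA dbl1 dbl2 !eqxx.
Qed.

Lemma odd_mem x : odd (x.1 + x.2) -> x \in A.
Proof.
case: A_compressible => ringA _ oddA _ ox.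
have [rx|rx] := boolP (on_ring x); last exact: oddA rx ox.
by apply: ringA => //; move: rx ox; rewrite /on_ring /is_corner /=; lia.
Qed.

Lemma even_mem_dbl x : x \in A -> ~~ odd (x.1 + x.2) -> x = dbl (halve x).
Proof.
case: A_compressible => _ _ _ oddoddA xA ex.
have : ~~ (odd x.1 && odd x.2).
  apply/andP=> [[o1 o2]]; have nr : ~~ on_ring x.
    by rewrite /on_ring; have := ltn_ord x.1; have := ltn_ord x.2; lia.
  by rewrite (negbTE (oddoddA x nr o1 o2)) in xA.
by move=> eo; apply/esym/halveK; lia.
Qed.

Lemma ring_filled_compress : ring_filled C.
Proof.
case: A_compressible => ringA _ _ _ y ry cy; rewrite mem_compress; apply: ringA;
  move: ry cy; rewrite /on_ring /is_corner dbl1 dbl2 /=;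
  by have := ltn_ord y.1; have := ltn_ord y.2; lia.
Qed.

Lemma dual_mid z z' w : adj z z' -> dual A (mid z z') w -> w = dbl z \/ w = dbl z'.
Proof.
move=> azz /and3P[_ wA aw]; have ew : ~~ odd (w.1 + w.2) by rewrite (odd_adj aw) odd_mid.
rewrite (even_mem_dbl wA ew) adj_sym in aw *.
by case: (adj_dbl_midE azz aw) => ->; [left | right].
Qed.

Lemma dual_compress y y' : dual C y y' ->
  [/\ dual A (dbl y) (mid y y'), dual A (mid y y') (dbl y') & adj y y'].
Proof.
rewrite /dual !mem_compress => /and3P[yA y'A ayy].
rewrite yA y'A odd_mem ?odd_mid // adj_dbl_mid // midC adj_sym adj_dbl_mid //.
by rewrite adj_sym.
Qed.

Section RemovedEdge.
Variables z z' : cell (n./2).+1.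
Local Notation E := (remove_edge (dual A) (dbl z) (mid z z')).
Local Notation E' := (remove_edge (dual C) z z').

Lemma connect_lift y y' : connect E' y y' -> connect E (dbl y) (dbl y').
Proof.
apply: (connect_invariant (P := fun t => connect E (dbl y) (dbl t))) => [|u v yu].
  exact: connect0.
case/andP=> duv kept; have [d1 d2 auv] := dual_compress duv.
apply: connect_trans yu (connect_trans (connect1 (y := mid u v) _) (connect1 _));
  by rewrite /remove_edge ?d1 ?d2 /=; apply: contra kept; move: auv; coords; lia.
Qed.

Lemma connect_project x : connect E (dbl z) x -> forall t, dbl t \in A ->
  x = dbl t \/ (exists2 s, adj t s & x = mid t s) -> connect E' z t.
Proof.
pose P x := forall t, dbl t \in A ->
  x = dbl t \/ (exists2 s, adj t s & x = mid t s) -> connect E' z t.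
apply: (connect_invariant (P := P)) => [t _ [/dbl_inj <- | [s ats /eqP]] | u v IHu].
- exact: connect0.
- by rewrite (negbTE (dbl_neq_mid _ ats)).
case/andP=> /[dup] duv /and3P[uA _ auv] kept t tA [vt | [s ats vts]].
  have ou : odd (u.1 + u.2).
    by move: (odd_adj auv); rewrite vt (negbTE (odd_dbl t)) => /esym/negbFE.
  have /adj_dblP/(_ ou)[s ats us] : adj (dbl t) u by rewrite -vt adj_sym.
  by apply: IHu tA _; right; exists s.
have /(dual_mid ats)[ut | us] : dual A (mid t s) u by rewrite -vts dual_sym.
  by apply: IHu tA _; left.
have zs : connect E' z s by apply: IHu (or_introl us); rewrite -us.
have [-> | tz] := eqVneq t z; first exact: connect0.
apply: connect_trans zs (connect1 _).
rewrite /remove_edge /dual !mem_compress -us uA tA adj_sym ats /=.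
rewrite (negbTE tz) andbF orbF; apply: contra kept; rewrite us vts.
by case/andP=> /eqP-> /eqP->; rewrite midC !eqxx.
Qed.

Lemma nonbridge_lift : dual C z z' -> connect E' z z' ->
  dual A (dbl z) (mid z z') /\ connect E (dbl z) (mid z z').
Proof.
move=> dzz czz; have [d1 d2 azz] := dual_compress dzz; split=> //.
apply: connect_trans (connect_lift czz) (connect1 _).
by rewrite /remove_edge dual_sym d2 /=; move: azz; coords; lia.
Qed.

Lemma nonbridge_project : adj z z' -> dbl z \in A -> connect E (dbl z) (mid z z') ->
  dual C z z' /\ connect E' z z'.
Proof.
move=> azz zA czz; have [z'A | z'A] := boolP (dbl z' \in A).
  split; first by rewrite /dual !mem_compress zA z'A azz.
  by apply: connect_project czz _ z'A _; right; exists z; [rewrite adj_sym | apply: midC].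
have iso w : ~~ E (mid z z') w.
  apply/andP=> [[dw kept]]; case: (dual_mid azz dw) => ew; rewrite ew in dw kept.
    by rewrite !eqxx orbT in kept.
  by move: dw; rewrite /dual (negbTE z'A) andbF.
rewrite (sym_connect_sym (remove_edge_sym (@dual_sym _ A) _ _)) in czz.
by move/eqP: (connect_isolated iso czz); rewrite (negbTE (dbl_neq_mid z azz)).
Qed.

End RemovedEdge.

Lemma connect_compress :
  {in C &, forall y y', connect (dual C) y y' = connect (dual A) (dbl y) (dbl y')}.
Proof.
move=> y y' _ y'C.
have loopA := eq_connect (remove_loop (@dual_irr _ A) (dbl y)).
have loopC := eq_connect (remove_loop (@dual_irr _ C) y).
apply/idP/idP => [|c]; first by rewrite -loopC => /connect_lift; rewrite mid_id loopA.
rewrite -loopC; apply: (connect_project (z' := y) (x := dbl y')) => //.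
- by rewrite mid_id loopA.
- by rewrite -mem_compress.
- by left.
Qed.

Lemma has_dual_cycle_compress : has_dual_cycle A <-> has_dual_cycle C.
Proof.
rewrite !has_dual_cycle_nonbridge; split=> [[u [v [duv cuv]]] | [z [z' [dzz czz]]]]; last first.
  by exists (dbl z), (mid z z'); apply: nonbridge_lift.
wlog eu : u v duv cuv / ~~ odd (u.1 + u.2).
  move=> W; have [ou|] := boolP (odd (u.1 + u.2)); last exact: W duv cuv.
  apply: (W v u); first by rewrite dual_sym.
    rewrite (eq_connect (remove_edgeC _ _ _)).
    by rewrite (sym_connect_sym (remove_edge_sym (@dual_sym _ A) _ _)).
  by case/and3P: duv => _ _ /odd_adj ->; rewrite ou.
case/and3P: (duv) => uA _ auv; have u_dbl := even_mem_dbl uA eu.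
have ov : odd (v.1 + v.2) by rewrite (odd_adj auv) eu.
have /adj_dblP/(_ ov)[z' azz ev] : adj (dbl (halve u)) v by rewrite -u_dbl.
exists (halve u), z'; apply: nonbridge_project azz _ _; first by rewrite -u_dbl.
by rewrite -ev -u_dbl.
Qed.

Hypothesis n_gt3 : 3 < n.

Lemma grid_cover_compress : polyomino A -> grid_cover C.
Proof.
move=> [_ connA] t t' att; rewrite !mem_compress.
have [|tA] := boolP (dbl t \in A); first by left.
have [|t'A] := boolP (dbl t' \in A); [by right | exfalso].
have mA := odd_mem (odd_mid att).
have iso w : ~~ dual A (mid t t') w.
  apply/negP => dw; case/and3P: (dw) => _ wA _.
  by case: (dual_mid att dw) => ew; move: wA; rewrite ew; apply/negP.
have : 1 < #|A| by case: A_compressible => ringA _ _ _; apply: ring_filled_card ringA; lia.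
suff : #|A| <= 1 by lia.
apply/card_le1_eqP => x x' xA x'A.
by rewrite (connect_isolated iso (connA _ _ mA xA)) (connect_isolated iso (connA _ _ mA x'A)).
Qed.

Lemma connect_from_dbl x : grid_cover C -> x \in A ->
  exists2 t, t \in C & connect (dual A) (dbl t) x.
Proof.
move=> cover xA; have [ox | ex] := boolP (odd (x.1 + x.2)); last first.
  by exists (halve x); rewrite ?mem_compress -(even_mem_dbl xA ex) ?connect0.
have /adj_dblP/(_ ox)[s' ass' ->] : adj (dbl (halve x)) x by move: ox; coords; lia.
case: (cover _ _ ass') => [sC | s'C].
  exists (halve x) => //; apply: connect1.
  by rewrite /dual -mem_compress sC odd_mem ?odd_mid // adj_dbl_mid.
exists s' => //; apply: connect1.
by rewrite /dual -mem_compress s'C odd_mem ?odd_mid // midC adj_dbl_mid // adj_sym.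
Qed.

Lemma polyomino_compress : polyomino A <-> polyomino C /\ grid_cover C.
Proof.
have [ringA _ _ _] := A_compressible.
have small_gt2 : 2 < (n./2).+1 by lia.
split=> [pA | [[_ connC] cover]].
  have [_ connA] := pA; split; last exact: grid_cover_compress.
  split; last by move=> y y' yC y'C; rewrite connect_compress // connA // -mem_compress.
  by rewrite -card_gt0 ltnW // (ring_filled_card small_gt2 ring_filled_compress).
split; first by rewrite -card_gt0 ltnW // (ring_filled_card _ ringA); lia.
move=> x x' xA x'A.
have [t tC tx] := connect_from_dbl cover xA; have [t' t'C tx'] := connect_from_dbl cover x'A.
rewrite (sym_connect_sym (@dual_sym _ A)) in tx.
by apply: connect_trans tx (connect_trans _ tx'); rewrite -connect_compress // connC.
Qed.

End Compression.

Theorem lemma8 (N : nat) (A : arrangement N) :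
  5 <= N -> odd N -> compressible A ->
  (acyclic_polyomino A <->
   (acyclic_polyomino (compress A) /\
    forall H : {set cell (N.+1)./2}, is_hole (compress A) H -> #|H| = 1)).
Proof.
case: N A => [|n] A // N_ge5 N_odd A_compr.
have n_gt3 : 3 < n by [].
have small_gt2 : 2 < (n./2).+1 by lia.
have := polyomino_compress N_odd A_compr n_gt3.
have := has_dual_cycle_compress N_odd A_compr.
have := holes_singleton_cover small_gt2 (ring_filled_compress N_odd A_compr).
rewrite /acyclic_polyomino; tauto.
Qed.
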